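(* Let $(K,\mathrm{val})$ be a $2$-henselian valued field whose residue class field $F$ has characteristic $\neq 2$, let $A$ be a subring with $B\subseteq A\subseteq K$, $H=\mathrm{val}(A^\times)$, and let $\mathcal M$ be a quasi-quadratic module in $A$. Then $$\mathcal M=\bigcup_{g\in H\cup G_{\ge e}}\Phi^A\big(M_g^A(\mathcal M),[\![g]\!]\big).$$
   Context: Let $(G,\le)$ be a totally ordered abelian group written multiplicatively with identity $e$; $G_{\ge e}=\{g\in G:g\ge e\}$, $G^2=\{g^2:g\in G\}$. Let $(K,\mathrm{val})$ be a valued field with surjective valuation $\mathrm{val}:K\to G\cup\{\infty\}$, valuation ring $B=\{x:\mathrm{val}(x)\ge e\}$, residue map $\pi:B\to F$, residue field $F$. A strict unit is $x\in B^\times$ with $\pi(x)=1$; when $\mathrm{char}F\ne2$, $2$-henselian is equivalent to every strict unit being a square in $K$. For a subring $A$ with $B\subseteq A\subseteq K$ put $H=\mathrm{val}(A^\times)$; $H$ is a convex subgroup of $G$ and $\mathrm{val}(A\setminus\{0\})=H\cup G_{\ge e}$. For $g\in G$: $\overline g$ is its class in $G/G^2$, $[\![g]\!]$ its class in $G/H^2$; ''$\mathrm{val}(x)=\overline g$'' means $\overline{\mathrm{val}(x)}=\overline g$, similarly for $[\![\cdot]\!]$. A quasi-quadratic module in a commutative ring $R$ is a subset $M\subseteq R$ with $M+M\subseteq M$ and $a^2M\subseteq M$ for all $a\in R$. A pseudo-angular component map is a map $\mathrm{p.an}:K^\times\to F^\times$ such that: (1) $\mathrm{p.an}(u)=\pi(u)$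 for $u\in B^\times$; (2) $\mathrm{p.an}(ux)=\pi(u)\mathrm{p.an}(x)$ for $u\in B^\times,x\in K^\times$; (3) for all $g\in G$, $c\in F^\times$ there is $w\in K$ with $\mathrm{val}(w)=g$, $\mathrm{p.an}(w)=c$; (4) for nonzero $x_1,x_2$ with $x_1+x_2\ne0$: if $\mathrm{val}(x_1)<\mathrm{val}(x_2)$ then $\mathrm{p.an}(x_1+x_2)=\mathrm{p.an}(x_1)$; if $\mathrm{val}(x_1)=\mathrm{val}(x_2)$ and $\mathrm{p.an}(x_1)+\mathrm{p.an}(x_2)\ne0$ then $\mathrm{val}(x_1+x_2)=\mathrm{val}(x_1)$ and $\mathrm{p.an}(x_1+x_2)=\mathrm{p.an}(x_1)+\mathrm{p.an}(x_2)$; (5) if $x,y\in K^\times$, $\overline{\mathrm{val}(x)}=\overline{\mathrm{val}(y)}$ and $\mathrm{p.an}(x)=\mathrm{p.an}(y)$ then $y=u^2x$ for some $u\in K^\times$; (6) for $a,u\in K^\times$ there is $k\in F^\times$ with $\mathrm{p.an}(au^2)=\mathrm{p.an}(a)k^2$. Such a map exists under the hypotheses; fix one. For $g\in G$ and a quasi-quadratic module $M$ in $F$: $$\Phi^A(M,[\![g]\!])=\{x\in A\setminus\{0\}:\ \mathrm{val}(x)=\overline g,\ (\mathrm{val}(x)=[\![g]\!]\ \text{or}\ \mathrm{val}(x)>g),\ \mathrm{p.an}(x)\in M\}\cup\{0\}.$$ For a quasi-quadratic module $\mathcal M$ in $A$ and $g\in G$: $M_g^A(\mathcal M)=\{\mathrm{p.an}(x):x\in\mathcal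 M\setminus\{0\},\ \mathrm{val}(x)=g\}\cup\{0\}$. *)

From mathcomp Require Import all_boot all_order all_algebra.
Import GRing.Theory.
Local Open Scope ring_scope.

(* The paper's multiplicative group (G, <=, e) is rendered as a zmodType G
   with 0 = e, + = group law, g + g = g^2, together with a relation le. *)
Definition ordered_group {G : zmodType} (le : rel G) : Prop :=
  [/\ reflexive le, antisymmetric le, transitive le, total le
    & forall x y z : G, le x y -> le (x + z) (y + z)].

Definition glt {G : zmodType} (le : rel G) (x y : G) : bool :=
  (x != y) && le x y.

(* G \cup {oo}: None stands for oo *)
Definition vle {G : zmodType} (le : rel G) (a b : option G) : bool :=
  match a, b with
  | _, None => true
  | None, Some _ => false
  | Some x, Some y => le x y
  end.

Definition vlt {G : zmodType} (le : rel G) (a b : option G) : bool :=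
  (a != b) && vle le a b.

Definition vadd {G : zmodType} (a b : option G) : option G :=
  match a, b with
  | Some x, Some y => Some (x + y)
  | _, _ => None
  end.

Definition valuation {G : zmodType} (le : rel G) {K : fieldType}
  (val : K -> option G) : Prop :=
  [/\ (forall x, val x = None <-> x = 0),
      (forall x y, val (x * y) = vadd (val x) (val y)),
      (forall x y g, vle le g (val x) -> vle le g (val y) ->
                     vle le g (val (x + y)))
    & (forall g : G, exists x, val x = Some g)].

Definition Bring {G : zmodType} (le : rel G) {K : fieldType}
  (val : K -> option G) (x : K) : Prop := vle le (Some 0) (val x).

(* residue map pi : B -> F (values outside B are irrelevant) *)
Definition residue_map {G : zmodType} (le : rel G) {K F : fieldType}
  (val : K -> option G) (res : K -> F) : Prop :=
  [/\ res 1 = 1,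
      (forall x y, Bring le val x -> Bring le val y -> res (x + y) = res x + res y),
      (forall x y, Bring le val x -> Bring le val y -> res (x * y) = res x * res y),
      (forall c : F, exists x, Bring le val x /\ res x = c)
    & (forall x, Bring le val x -> (res x = 0 <-> vlt le (Some 0) (val x)))].

Definition strict_unit {G : zmodType} {K F : fieldType}
  (val : K -> option G) (res : K -> F) (x : K) : Prop :=
  val x = Some 0 /\ res x = 1.

(* 2-henselian (for char F <> 2): every strict unit is a square *)
Definition two_henselian {G : zmodType} {K F : fieldType}
  (val : K -> option G) (res : K -> F) : Prop :=
  forall x, strict_unit val res x -> exists y, x = y ^+ 2.

Definition sqclass_eq {G : zmodType} (g h : G) : Prop :=
  exists k : G, g = h + (k + k).

Definition Hgrp {G : zmodType} {K : fieldType} (val : K -> option G)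
  (A : K -> Prop) (g : G) : Prop :=
  exists x, A x /\ (exists y, A y /\ x * y = 1) /\ val x = Some g.

Definition sqclassH_eq {G : zmodType} {K : fieldType} (val : K -> option G)
  (A : K -> Prop) (g h : G) : Prop :=
  exists k : G, Hgrp val A k /\ g = h + (k + k).

Definition subring {K : fieldType} (A : K -> Prop) : Prop :=
  [/\ A 1, (forall x y, A x -> A y -> A (x - y))
    & (forall x y, A x -> A y -> A (x * y))].

(* quasi-quadratic module M in the subring A of R (taken nonempty, i.e. 0 \in M) *)
Definition qqm {R : comNzRingType} (A : R -> Prop) (M : R -> Prop) : Prop :=
  [/\ (forall x, M x -> A x), M 0,
      (forall x y, M x -> M y -> M (x + y))
    & (forall a x, A a -> M x -> M (a ^+ 2 * x))].

Definition pseudo_angular {G : zmodType} (le : rel G) {K F : fieldType}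
  (val : K -> option G) (res : K -> F) (pan : K -> F) : Prop :=
  (forall x, x != 0 -> pan x != 0) /\
  (forall u, val u = Some 0 -> pan u = res u) /\
  (forall u x, val u = Some 0 -> x != 0 -> pan (u * x) = res u * pan x) /\
  (forall (g : G) (c : F), c != 0 ->
               exists w, val w = Some g /\ pan w = c) /\
  (forall x1 x2, x1 != 0 -> x2 != 0 -> x1 + x2 != 0 ->
               (vlt le (val x1) (val x2) -> pan (x1 + x2) = pan x1) /\
               (val x1 = val x2 -> pan x1 + pan x2 != 0 ->
                  val (x1 + x2) = val x1 /\ pan (x1 + x2) = pan x1 + pan x2)) /\
  (forall x y gx gy, x != 0 -> y != 0 -> val x = Some gx ->
               val y = Some gy -> sqclass_eq gx gy -> pan x = pan y ->
               exists u, u != 0 /\ y = u ^+ 2 * x) /\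
  (forall a u, a != 0 -> u != 0 ->
               exists k, k != 0 /\ pan (a * u ^+ 2) = pan a * k ^+ 2).

Definition PhiA {G : zmodType} (le : rel G) {K F : fieldType}
  (val : K -> option G) (pan : K -> F) (A : K -> Prop) (M : F -> Prop)
  (g : G) (x : K) : Prop :=
  x = 0 \/
  (A x /\ x != 0 /\
   exists gx, val x = Some gx /\ sqclass_eq gx g /\
              (sqclassH_eq val A gx g \/ glt le g gx) /\ M (pan x)).

Definition MgA {G : zmodType} {K F : fieldType}
  (val : K -> option G) (pan : K -> F) (MM : K -> Prop) (g : G) (c : F) : Prop :=
  c = 0 \/ exists x, MM x /\ x != 0 /\ val x = Some g /\ pan x = c.

From mathcomp Require Import all_boot all_order all_algebra.
Import GRing.Theory.
Local Open Scope ring_scope.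

(* The value group G is written additively, so the square class of g is
   g + 2G and the class [[g]] is g + 2H.  Two facts about the ring A drive
   the proof: val(A \ {0}) = H u G_{>=0} (lemmas [val_A_cover] and
   [A_of_val]), and doubling in an ordered group is injective and
   sign-preserving ([double_inj], [ge0_of_lt_double]).
   - Inclusion M <= U Phi: a nonzero x in M of value g lies in
     Phi(M_g(M), [[g]]) with g itself as index, and g is in H u G_{>=0}
     by the first fact.
   - Inclusion U Phi <= M: if x is in Phi(M_g(M), [[g]]), its pseudo-angular
     component equals that of some y in M of value g, so by axiom (5) of
     pseudo-angular maps x = u^2 y.  The conditions defining Phi force
     val(u) into H u G_{>=0}, hence u is in A and x = u^2 y is in M because
     M is a quasi-quadratic module.
   The 2-henselian hypothesis enters only through axiom (5) of the
   pseudo-angular map, whose existence it guarantees. *)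

Lemma sqclass_eq_refl {G : zmodType} (g : G) : sqclass_eq g g.
Proof. by exists 0; rewrite !addr0. Qed.

Lemma sqclass_eq_sym {G : zmodType} {g h : G} : sqclass_eq g h -> sqclass_eq h g.
Proof. by case=> k ->; exists (- k); rewrite -addrA -opprD subrr addr0. Qed.

Section OrderedGroup.
Variables (G : zmodType) (le : rel G).
Hypothesis hG : ordered_group le.

Lemma double_inj (a b : G) : a + a = b + b -> a = b.
Proof.
have [_ lanti _ ltot ltr] := hG.
wlog lab : a b / le a b => [W E|E].
  by case/orP: (ltot a b) => h; [exact: W | symmetry; exact: W].
have h1 : le (a + a) (a + b) by rewrite [a + b]addrC; exact: ltr.
have h2 : le (a + b) (a + a) by rewrite E; exact: ltr.
by apply: (addrI a); apply: lanti; rewrite h1 h2.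
Qed.

Lemma oppr_ge0_of_le0 (g : G) : le g 0 -> le 0 (- g).
Proof. by have [_ _ _ _ ltr] := hG => /(ltr _ _ (- g)); rewrite subrr add0r. Qed.

Lemma ge0_of_lt_double (g a : G) : glt le g (a + a + g) -> le 0 a.
Proof.
have [_ lanti ltrans ltot ltr] := hG.
move=> /andP[ne lt]; case/orP: (ltot 0 a) => // a_le0.
have aa_le0 : le (a + a) 0.
  by apply: (ltrans a) => //; have := ltr _ _ a a_le0; rewrite add0r.
have aa_ge0 : le 0 (a + a) by have := ltr _ _ (- g) lt; rewrite subrr addrK.
have aa0 : a + a = 0 by apply: lanti; rewrite aa_le0 aa_ge0.
by rewrite aa0 add0r eqxx in ne.
Qed.

Section Valuation.
Variables (K : fieldType) (val : K -> option G).
Hypothesis hval : valuation le val.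

Lemma valP {y : K} : y != 0 -> exists g, val y = Some g.
Proof.
have [v0 _ _ _] := hval; move=> y0.
case E: (val y) => [g|]; first by exists g.
by move/v0: E => E; rewrite E eqxx in y0.
Qed.

Lemma val1 : val 1 = Some 0.
Proof.
have [_ vM _ _] := hval.
have [a Ea] := valP (oner_neq0 K).
have E : a + a = a + 0 by move: (vM 1 1); rewrite mulr1 Ea /= addr0 => -[] <-.
by rewrite Ea (addrI a E).
Qed.

Lemma valV {y : K} {g : G} : y != 0 -> val y = Some g -> val y^-1 = Some (- g).
Proof.
have [_ vM _ _] := hval; move=> y0 Ey.
have [h Eh] := valP (invr_neq0 y0).
have := vM y y^-1; rewrite mulfV // val1 Ey Eh /= => -[] E.
by congr Some; apply/eqP; rewrite -addr_eq0 addrC -E.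
Qed.

Section Overring.
Variable A : K -> Prop.
Hypotheses (hA : subring A) (BsubA : forall x, Bring le val x -> A x).

Lemma Hgrp0 : Hgrp val A 0.
Proof.
have [A1 _ _] := hA.
by exists 1; split=> //; split; [exists 1; rewrite mulr1 | exact: val1].
Qed.

(* val(A \ {0}) is contained in H u G_{>=0}: an element of negative value
   has its inverse in B, hence in A, so it is a unit of A. *)
Lemma val_A_cover (x : K) (g : G) :
  A x -> x != 0 -> val x = Some g -> Hgrp val A g \/ le 0 g.
Proof.
have [_ _ _ ltot _] := hG; move=> Ax x0 Ex.
case/orP: (ltot 0 g) => g_le0; [by right | left].
exists x; split=> //; split=> //; exists x^-1; split; last by rewrite mulfV.
by apply: BsubA; rewrite /Bring (valV x0 Ex) /=; exact: oppr_ge0_of_le0.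
Qed.

(* Conversely every element whose value lies in H u G_{>=0} belongs to A:
   if val u = val z with z a unit of A, then u z^-1 is in B. *)
Lemma A_of_val (u : K) (g : G) :
  Hgrp val A g \/ le 0 g -> val u = Some g -> A u.
Proof.
have [_ vM _ _] := hval; have [_ _ AM] := hA.
case=> [[z [Az [[w [Aw zw]] Ez]]] | g_ge0] Eu; last by apply: BsubA; rewrite /Bring Eu.
have -> : u = (u * w) * z by rewrite -mulrA [w * z]mulrC zw mulr1.
apply: AM => //; apply: BsubA.
by rewrite /Bring vM Eu -Ez -vM zw val1 /=; have [lrefl _ _ _ _] := hG.
Qed.

Lemma half_value_cover (a g : G) :
  sqclassH_eq val A (a + a + g) g \/ glt le g (a + a + g) ->
  Hgrp val A a \/ le 0 a.
Proof.
case=> [[h [Hh Eh]] | lt]; last by right; exact: ge0_of_lt_double lt.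
left; suff -> : a = h by [].
by apply: double_inj; apply: (addIr g); rewrite Eh addrC.
Qed.

Section PseudoAngular.
Variables (F : fieldType) (res pan : K -> F) (MM : K -> Prop).
Hypotheses (hpan : pseudo_angular le val res pan) (hMM : qqm A MM).

Lemma qqm_sub_Phi (x : K) : MM x ->
  exists g, (Hgrp val A g \/ le 0 g) /\ PhiA le val pan A (MgA val pan MM g) g x.
Proof.
have [MA _ _ _] := hMM; have [lrefl _ _ _ _] := hG; move=> Mx.
have [->|x0] := eqVneq x 0; first by exists 0; split; [right | left].
have [g Ex] := valP x0.
exists g; split; first exact: val_A_cover (MA x Mx) x0 Ex.
right; split; first exact: MA.
split=> //; exists g; split=> //; split; first exact: sqclass_eq_refl.
split; last by right; exists x.
by left; exists 0; rewrite !addr0; split=> //; exact: Hgrp0.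
Qed.

(* Every element of Phi(M_g(M), [[g]]) is a square multiple u^2 y of some
   y in M of value g, with u in A; hence it lies in M. *)
Lemma Phi_sub_qqm (g : G) (x : K) :
  PhiA le val pan A (MgA val pan MM g) g x -> MM x.
Proof.
have [_ M0 _ Msq] := hMM; have [_ vM _ _] := hval.
have [pan0 [_ [_ [_ [_ [pan_sq _]]]]]] := hpan.
case=> [->|[_ [x0 [gx [Ex [cls [Hcls Mpan]]]]]]]; first exact: M0.
case: Mpan => [pan_x0|[y [My [y0 [Ey pan_yx]]]]].
  by move: (pan0 x x0); rewrite pan_x0 eqxx.
have [u [u0 x_uy]] := pan_sq y x g gx y0 x0 Ey Ex (sqclass_eq_sym cls) pan_yx.
have [a Eu] := valP u0.
have gxE : gx = a + a + g.
  by move: Ex; rewrite x_uy vM expr2 vM Eu Ey /= => -[].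
have Au : A u by apply: A_of_val Eu; apply: (half_value_cover _ g); rewrite -gxE.
by rewrite x_uy; exact: Msq.
Qed.

End PseudoAngular.
End Overring.
End Valuation.
End OrderedGroup.

Theorem mainTheorem6 (G : zmodType) (le : rel G) (K F : fieldType)
  (val : K -> option G) (res : K -> F) (pan : K -> F)
  (A : K -> Prop) (MM : K -> Prop) :
  ordered_group le ->
  valuation le val ->
  residue_map le val res ->
  (2%:R : F) != 0 ->
  two_henselian val res ->
  pseudo_angular le val res pan ->
  subring A ->
  (forall x, Bring le val x -> A x) ->
  qqm A MM ->
  forall x : K,
    MM x <-> exists g : G, (Hgrp val A g \/ le 0 g) /\
                           PhiA le val pan A (MgA val pan MM g) g x.
Proof.
move=> hG hval _ _ _ hpan hA BsubA hMM x; split.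
- exact: qqm_sub_Phi.
- by case=> g [_]; exact: (@Phi_sub_qqm _ _ hG _ _ hval _ hA BsubA _ res).
Qed.
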